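(* Let $N \ge 1$. Then: (1) $f(N,1)=0$. (2) $f(N+1,\Delta) \geq f(N,\Delta)+1$ for $N \geq \Delta \geq 2$. (3) $f(N,\Delta+1) \geq f(N,\Delta)+1$ for $\Delta \ge 1$ and $N > \binom{\Delta+1}{2}$. (4) For $\Delta+1 \le N$: if $\Delta > \frac{N}{2}$ then $f(N,\Delta+1) \geq f(N,\Delta)$, and if $\Delta > \lceil \frac{N}{2} \rceil$ then $f(N,\Delta+1) \geq f(N,\Delta)+1$.
   Context: All graphs are finite and simple; $L(G)$ is the line graph of $G$; $e(\cdot)$, $\Delta(\cdot)$, $\delta(\cdot)$ denote number of edges, maximum degree and minimum degree. For integers $N \ge \Delta \ge 1$, $f(N,\Delta) = \max\{ e(L(G)) : e(G)=N, \Delta(G)=\Delta, \delta(G)\geq 1\}$, the maximum over all simple graphs $G$. *)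

From mathcomp Require Import all_boot all_order.
From mathcomp Require Import boolp.
Set Implicit Arguments. Unset Strict Implicit. Unset Printing Implicit Defensive.

(* A finite simple graph on a finite vertex type T is given by its edge set
   E : {set {set T}}, every edge being a 2-element subset of T. *)
Definition simple_graph (T : finType) (E : {set {set T}}) : Prop :=
  forall e, e \in E -> #|e| = 2.

Definition deg (T : finType) (E : {set {set T}}) (v : T) : nat :=
  #|[set e in E | v \in e]|.

Definition maxdeg (T : finType) (E : {set {set T}}) : nat :=
  \max_(v : T) deg E v.

Definition mindeg_ge1 (T : finType) (E : {set {set T}}) : Prop :=
  forall v : T, 0 < deg E v.

(* Edge set of the line graph L(G): its vertices are the edges of G, and two
   distinct edges are adjacent iff they share an endpoint. *)
Definition line_edges (T : finType) (E : {set {set T}}) : {set {set {set T}}} :=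
  [set F : {set {set T}} | [&& F \subset E, #|F| == 2 &
     [forall e1 in F, forall e2 in F, e1 :&: e2 != set0]]].

Definition achievable (N D k : nat) : Prop :=
  exists (T : finType) (E : {set {set T}}),
    [/\ simple_graph E, #|E| = N, maxdeg E = D, mindeg_ge1 E
      & #|line_edges E| = k].

(* f(N, D) = max of e(L(G)) over such graphs.  Since e(L(G)) <= binom(N,2)
   < N*N + 1, restricting the maximum to k <= N*N loses nothing. *)
Definition f (N D : nat) : nat :=
  \max_(k < (N * N).+1 | `[< achievable N D k >]) k.

From mathcomp Require Import all_boot all_order.
From mathcomp Require Import boolp.
From mathcomp Require Import zify.
Set Implicit Arguments.

(* For a simple graph, e(L(G)) is the sum over the vertices of binom(d(v), 2).
   Parts (2)-(4) are obtained by transforming an extremal graph for (N, D).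
   (2): subdivide an edge ab by a new vertex w; this adds one edge, keeps the
   maximum degree D >= 2 and adds exactly one adjacent pair (at w).
   (3), (4): take a vertex v of degree D and move an edge g avoiding v onto v;
   the maximum degree becomes D + 1.  If N > binom(D+1, 2), some edge xy
   avoiding v has x not adjacent to v, and moving xy to vx gains
   D - (d(y) - 1) >= 1.  For (4), moving an edge ab to vw with w new gains
   D - (d(a) - 1) - (d(b) - 1) >= 2D - N - 1, as d(a) + d(b) + d(v) <= N + 3.
   When no graph realizes (N, D) we have f(N, D) = 0, and a star K_{1,D} with
   an edge subdivided N - D times shows that the right-hand sides are >= 1. *)

Lemma sum_set2 (T : finType) (F : T -> nat) x y :
  x != y -> \sum_(z in [set x; y]) F z = F x + F y.
Proof. by move=> xy; rewrite big_setU1 ?big_set1 // inE. Qed.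

Lemma card_set_sum (I : finType) (A : {pred I}) (P : pred I) :
  #|[set i in A | P i]| = \sum_(i in A) P i.
Proof.
rewrite -sum1_card [LHS]big_mkcond [RHS]big_mkcond /=.
by apply: eq_bigr => i _; rewrite inE; case: (i \in A); case: (P i).
Qed.

Definition line_size (T : finType) (E : {set {set T}}) : nat :=
  \sum_v 'C(deg E v, 2).

Section SimpleGraphs.

Variable T : finType.
Implicit Types (E : {set {set T}}) (e g h : {set T}).

Lemma deg_setU1 E h z : h \notin E -> deg (h |: E) z = (z \in h) + deg E z.
Proof.
move=> hE; rewrite /deg; case: (boolP (z \in h)) => zh /=.
  have -> : [set e in h |: E | z \in e] = h |: [set e in E | z \in e].
    by apply/setP => e; rewrite !inE; case: eqP => // ->; rewrite zh.
  by rewrite cardsU1 inE (negbTE hE).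
by apply: eq_card => e; rewrite !inE; case: eqP => // ->; rewrite (negbTE zh) (negbTE hE).
Qed.

Lemma deg_setD1 E g z : g \in E -> deg E z = (z \in g) + deg (E :\ g) z.
Proof. by move=> gE; rewrite -[in LHS](setD1K gE) deg_setU1 // setD11. Qed.

Lemma sum_deg_setD1 E g :
  g \in E -> \sum_(z in g) deg E z = #|g| + \sum_(z in g) deg (E :\ g) z.
Proof.
move=> gE; rewrite -sum1_card -big_split; apply: eq_bigr => z zg /=.
by rewrite (deg_setD1 z gE) zg.
Qed.

Lemma deg_sum E v : deg E v = \sum_(e in E) (v \in e).
Proof. exact: card_set_sum. Qed.

Lemma deg_gt0 E e v : e \in E -> v \in e -> 0 < deg E v.
Proof. by move=> eE ve; rewrite card_gt0; apply/set0Pn; exists e; rewrite inE eE ve. Qed.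

Lemma isolated_notin E w e : deg E w = 0 -> e \in E -> w \notin e.
Proof. by move=> w0 eE; apply/negP => /(deg_gt0 eE); rewrite w0. Qed.

Lemma deg_le_card E v : deg E v <= #|E|.
Proof. by apply: subset_leq_card; apply/subsetP => e; rewrite inE => /andP[]. Qed.

Lemma deg_le_maxdeg E v : deg E v <= maxdeg E.
Proof. exact: (@leq_bigmax _ (deg E)). Qed.

Lemma maxdeg_eq E v m : deg E v = m -> (forall z, deg E z <= m) -> maxdeg E = m.
Proof.
move=> <- le_m; apply/eqP; rewrite eqn_leq deg_le_maxdeg andbT.
by apply/bigmax_leqP => z _; apply: le_m.
Qed.

Lemma maxdeg_attained E : 0 < maxdeg E -> exists v, deg E v = maxdeg E.
Proof.
move=> m0; apply: contrapT => none.
suff : maxdeg E <= (maxdeg E).-1 by rewrite leqNgt ltn_predL m0.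
apply/bigmax_leqP => z _; rewrite -ltnS prednK // ltn_neqAle deg_le_maxdeg andbT.
by apply/eqP => dz; apply: none; exists z.
Qed.

Lemma line_size_maxdeg_le1 E : maxdeg E <= 1 -> line_size E = 0.
Proof.
move=> m1; apply: big1 => v _; apply: bin_small.
by rewrite ltnS (leq_trans (deg_le_maxdeg E v)).
Qed.

Lemma line_size_setU1 E h :
  h \notin E -> line_size (h |: E) = line_size E + \sum_(z in h) deg E z.
Proof.
move=> hE; rewrite /line_size [in RHS](big_mkcond (fun z => z \in h)) -big_split /=.
apply: eq_bigr => z _; rewrite deg_setU1 //.
by case: (z \in h); rewrite ?addn0 // add1n binS bin1.
Qed.

Lemma simple_edge_eq E e x y : simple_graph E ->
  e \in E -> x \in e -> y \in e -> x != y -> e = [set x; y].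
Proof.
move=> sE eE xe ye xy; apply/esym/eqP; rewrite eqEcard cards2 xy (sE _ eE) leqnn andbT.
by apply/subsetP => z; rewrite !inE => /orP[] /eqP ->.
Qed.

Lemma edge_set2 E e x :
  simple_graph E -> e \in E -> x \in e -> exists2 y, x != y & e = [set x; y].
Proof.
move=> sE eE; have /cards2P[a [b [ab ->]]] : #|e| == 2 by rewrite sE.
rewrite !inE => /orP[] /eqP ->; first by exists b.
by exists a; rewrite 1?eq_sym // setUC.
Qed.

Definition star_pairs E v : {set {set {set T}}} :=
  [set F : {set {set T}} | F \subset [set e in E | v \in e] & #|F| == 2].

Lemma star_pairs_line E v F : F \in star_pairs E v -> F \in line_edges E.
Proof.
rewrite !inE => /andP[sFv ->] /=; apply/andP; split.
  by apply/subsetP => e /(subsetP sFv); rewrite inE => /andP[].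
apply/forall_inP => e1 /(subsetP sFv); rewrite inE => /andP[_ v1].
apply/forall_inP => e2 /(subsetP sFv); rewrite inE => /andP[_ v2].
by apply/set0Pn; exists v; rewrite inE v1 v2.
Qed.

Lemma line_star_pairs E F : F \in line_edges E -> exists v, F \in star_pairs E v.
Proof.
rewrite inE => /and3P[sFE cF /forall_inP meet].
have /cards2P[e1 [e2 [_ defF]]] := cF.
have e1F : e1 \in F by rewrite defF set21.
have e2F : e2 \in F by rewrite defF set22.
have /set0Pn[v] := forall_inP (meet e1 e1F) e2 e2F; rewrite inE => /andP[v1 v2].
exists v; rewrite inE cF andbT; apply/subsetP => e eF; rewrite inE (subsetP sFE) //=.
by move: eF; rewrite defF !inE => /orP[] /eqP ->.
Qed.

Lemma star_pairs_inj E u v F : simple_graph E ->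
  F \in star_pairs E u -> F \in star_pairs E v -> u = v.
Proof.
move=> sE; rewrite !inE => /andP[sFu /cards2P[e1 [e2 [e12 defF]]]] /andP[sFv _].
apply: contraTeq e12 => uv.
have endpoints e : e \in F -> e = [set u; v].
  move=> eF; move: (subsetP sFu e eF) (subsetP sFv e eF).
  by rewrite !inE => /andP[eE ue] /andP[_ ve]; exact: simple_edge_eq sE eE ue ve uv.
rewrite negbK (endpoints e1) ?defF ?set21 //.
by rewrite (endpoints e2) ?defF ?set22.
Qed.

Lemma card_line_edges E : simple_graph E -> #|line_edges E| = line_size E.
Proof.
move=> sE; have starC v : 'C(deg E v, 2) = \sum_F (F \in star_pairs E v).
  rewrite -cards_draws -sum1_card big_mkcond /=.
  by apply: eq_bigr => F _; case: (_ \in _).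
rewrite /line_size (eq_bigr _ (fun v _ => starC v)) exchange_big /=.
rewrite -sum1_card big_mkcond /=; apply: eq_bigr => F _.
case: ifP => [/line_star_pairs[v Fv] | FnL].
  rewrite (bigD1 v) //= Fv big1 // => u uv; apply/eqP; rewrite eqb0.
  by apply: contra uv => Fu; rewrite (star_pairs_inj sE Fu Fv).
by rewrite big1 // => v _; apply/eqP; rewrite eqb0; apply: contraFN FnL; apply: star_pairs_line.
Qed.

Lemma sum_deg_le E (S : {set T}) : simple_graph E ->
  \sum_(z in S) deg E z <= #|E| + 'C(#|S|, 2).
Proof.
(* An edge meets S in at most one vertex unless it is one of the pairs inside S. *)
move=> sE; have -> : \sum_(z in S) deg E z = \sum_(e in E) #|e :&: S|.
  under eq_bigr do rewrite deg_sum.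
  rewrite exchange_big /=; apply: eq_bigr => e _.
  by rewrite -card_set_sum; apply: eq_card => z; rewrite !inE andbC.
apply: leq_trans (_ : \sum_(e in E) (1 + (e \subset S)) <= _).
  apply: leq_sum => e eE; rewrite add1n; case: (boolP (e \subset S)) => eS /=.
    by rewrite -(sE _ eE) subset_leq_card ?subsetIl.
  rewrite -ltnS -(sE _ eE); apply: proper_card.
  by rewrite properE subsetIl subsetI subxx (negbTE eS).
rewrite big_split /= sum1_card -card_set_sum leq_add2l -cards_draws.
by apply: subset_leq_card; apply/subsetP => e; rewrite !inE => /andP[eE ->]; rewrite sE.
Qed.

Lemma sum_deg_edge_le E g v : simple_graph E -> g \in E -> v \notin g ->
  deg E v + \sum_(z in g) deg E z <= #|E| + 3.
Proof.
move=> sE gE vg; have := sum_deg_le (v |: g) sE.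
by rewrite big_setU1 //= cardsU1 vg (sE _ gE).
Qed.

Definition nbhd E v : {set T} := [set u | [set v; u] \in E].

Lemma card_nbhd_le E v : simple_graph E -> #|nbhd E v| <= deg E v.
Proof.
move=> sE; rewrite -(card_in_imset (f := fun u => [set v; u]) (D := nbhd E v)).
  apply: subset_leq_card; apply/subsetP => e /imsetP[u uN ->].
  by rewrite inE in uN; rewrite inE uN set21.
move=> u1 u2 u1N _ /= eq12; have : u1 \in [set v; u2] by rewrite -eq12 set22.
rewrite inE in u1N; have vu1 : v != u1 by move: (sE _ u1N); rewrite cards2; case: eqVneq.
by rewrite !inE eq_sym (negbTE vu1) => /eqP.
Qed.

Lemma card_le_bin_deg E v : simple_graph E ->
  (forall e x, e \in E -> v \notin e -> x \in e -> x \in nbhd E v) ->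
  #|E| <= 'C((deg E v).+1, 2).
Proof.
move=> sE inN.
have sub : E \subset
    [set e in E | v \in e] :|: [set F : {set T} | F \subset nbhd E v & #|F| == 2].
  apply/subsetP => e eE; rewrite !inE eE /=; case: (boolP (v \in e)) => //= ve.
  by rewrite sE // eqxx andbT; apply/subsetP => x; apply: inN.
apply: leq_trans (subset_leq_card sub) _; apply: leq_trans (leq_card_setU _ _) _.
rewrite cards_draws binS bin1 addnC leq_add2r.
exact: leq_bin2l (card_nbhd_le v sE).
Qed.

Lemma exists_edge_off_nbhd E v : simple_graph E ->
  'C((deg E v).+1, 2) < #|E| ->
  exists e x, [/\ e \in E, v \notin e, x \in e & x \notin nbhd E v].
Proof.
move=> sE; rewrite ltnNge => /negP; apply: contra_notP => none.
apply: card_le_bin_deg => // e x eE ve xe; apply/negPn/negP => xN.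
by apply: none; exists e, x.
Qed.

Lemma exists_edge_notin E v : deg E v < #|E| -> exists2 e, e \in E & v \notin e.
Proof.
rewrite ltnNge => /negP; apply: contra_notP => none.
apply: subset_leq_card; apply/subsetP => e eE; rewrite inE eE /=.
by apply/negPn/negP => ve; apply: none; exists e.
Qed.

Definition exchange E g h : {set {set T}} := h |: (E :\ g).

Section Exchange.

Variables (E : {set {set T}}) (g h : {set T}).
Hypotheses (gE : g \in E) (hE : h \notin E).

Let hEg : h \notin E :\ g.
Proof. by rewrite in_setD1 (negbTE hE) andbF. Qed.

Lemma deg_exchange z : deg (exchange E g h) z + (z \in g) = (z \in h) + deg E z.
Proof. by rewrite deg_setU1 // (deg_setD1 z gE); lia. Qed.

Lemma card_exchange : #|exchange E g h| = #|E|.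
Proof. by rewrite cardsU1 hEg (cardsD1 g E) gE. Qed.

Lemma simple_exchange : simple_graph E -> #|h| = 2 -> simple_graph (exchange E g h).
Proof. by move=> sE ch e; rewrite !inE => /orP[/eqP -> // | /andP[_ /(sE e)]]. Qed.

Lemma maxdeg_exchange v : v \in h -> v \notin g -> deg E v = maxdeg E ->
  maxdeg (exchange E g h) = (maxdeg E).+1.
Proof.
move=> vh vg dv; apply: (maxdeg_eq (v := v)).
  by have := deg_exchange v; rewrite vh (negbTE vg) dv; lia.
by move=> z; have := deg_exchange z; have := deg_le_maxdeg E z; lia.
Qed.

Lemma line_size_exchange :
  line_size (exchange E g h) + \sum_(z in g) deg (E :\ g) z =
  line_size E + \sum_(z in h) deg (E :\ g) z.
Proof.
have := line_size_setU1 (E :\ g) g (negbT (setD11 g E)); rewrite setD1K // => ->.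
by rewrite line_size_setU1 // addnAC.
Qed.

End Exchange.

Definition subdivision E a b w : {set {set T}} :=
  [set w; b] |: exchange E [set a; b] [set a; w].

Section Subdivision.

Variables (E : {set {set T}}) (a b w : T).
Hypotheses (sE : simple_graph E) (abE : [set a; b] \in E) (ab : a != b).
Hypothesis w0 : deg E w = 0.

Let aw : a != w.
Proof. by apply: contraTneq (deg_gt0 abE (set21 a b)) => ->; rewrite w0. Qed.

Let bw : b != w.
Proof. by apply: contraTneq (deg_gt0 abE (set22 a b)) => ->; rewrite w0. Qed.

Let awE : [set a; w] \notin E.
Proof. exact: contraTN (isolated_notin w0) (set22 a w). Qed.

Let wbE : [set w; b] \notin exchange E [set a; b] [set a; w].
Proof.
rewrite in_setU1 in_setD1 negb_or negb_and.
rewrite (contraTN (isolated_notin w0) (set21 w b)) orbT andbT.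
by apply: contraTneq (set22 w b) => ->; rewrite !inE negb_or eq_sym ab bw.
Qed.

Lemma deg_subdivision z : deg (subdivision E a b w) z = deg E z + (z == w).*2.
Proof.
rewrite /subdivision deg_setU1 //; move: (deg_exchange _ abE awE z); rewrite !inE.
have [->|zw] := eqVneq z w; first by rewrite ![w == _]eq_sym (negbTE aw) (negbTE bw); lia.
have [->|za] := eqVneq z a; first by rewrite (negbTE ab); lia.
by have [->|zb] := eqVneq z b; lia.
Qed.

Lemma simple_subdivision : simple_graph (subdivision E a b w).
Proof.
move=> e; rewrite in_setU1 => /orP[/eqP -> | ]; first by rewrite cards2 eq_sym bw.
by apply: simple_exchange => //; rewrite cards2 aw.
Qed.

Lemma card_subdivision : #|subdivision E a b w| = #|E|.+1.
Proof. by rewrite cardsU1 wbE card_exchange. Qed.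

Lemma maxdeg_subdivision : 1 < maxdeg E -> maxdeg (subdivision E a b w) = maxdeg E.
Proof.
move=> m2; have [v dv] := maxdeg_attained E (ltnW m2).
have vw : v != w by apply: contraTneq m2 => vw; rewrite -dv vw w0.
apply: (maxdeg_eq (v := v)); first by rewrite deg_subdivision (negbTE vw) addn0.
move=> z; rewrite deg_subdivision.
by have [->|_] := eqVneq z w; rewrite ?w0 // addn0 deg_le_maxdeg.
Qed.

Lemma line_size_subdivision : line_size (subdivision E a b w) = (line_size E).+1.
Proof.
rewrite /line_size (bigD1 w) // [in RHS](bigD1 w) //= deg_subdivision w0 eqxx.
rewrite (eq_bigr (fun z => 'C(deg E z, 2))) // => z zw.
by rewrite deg_subdivision (negbTE zw) addn0.
Qed.

End Subdivision.

Definition graph_image {T' : finType} (phi : T -> T') E : {set {set T'}} :=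
  [set phi @: e | e : {set T} in E].

Section Relabelling.

Context {T' : finType} (phi : T -> T').
Hypothesis phi_inj : injective phi.

Lemma card_graph_image E : #|graph_image phi E| = #|E|.
Proof. by rewrite card_imset //; apply: imset_inj. Qed.

Lemma simple_graph_image E : simple_graph E -> simple_graph (graph_image phi E).
Proof. by move=> sE _ /imsetP[e eE ->]; rewrite card_imset // sE. Qed.

Lemma deg_graph_image E x : deg (graph_image phi E) (phi x) = deg E x.
Proof.
rewrite /deg -(card_imset _ (imset_inj phi_inj)); apply: eq_card => e'; rewrite inE.
apply/andP/imsetP => [[/imsetP[e eE ->]] | [e]].
  by rewrite (mem_imset _ _ phi_inj) => xe; exists e; rewrite // inE eE xe.
by rewrite inE => /andP[eE xe] ->; rewrite (mem_imset _ _ phi_inj) xe imset_f.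
Qed.

Lemma deg_graph_image_notin E y :
  y \notin phi @: [set: T] -> deg (graph_image phi E) y = 0.
Proof.
move=> yN; apply/eqP; rewrite cards_eq0; apply/eqP/setP => e'; rewrite !inE.
apply/negbTE/andP => -[/imsetP[e _ ->] /imsetP[x _ yx]].
by move: yN; rewrite yx imset_f ?inE.
Qed.

Lemma big_deg_graph_image (R : Type) (idx : R) (op : Monoid.com_law idx)
    (F : nat -> R) E : F 0 = idx ->
  \big[op/idx]_y F (deg (graph_image phi E) y) = \big[op/idx]_x F (deg E x).
Proof.
move=> F0; rewrite (bigID [in phi @: [set: T]]) /= [X in op _ X]big1; last first.
  by move=> y /deg_graph_image_notin ->.
rewrite Monoid.mulm1
 big_imset /=; last by move=> x1 x2 _ _; apply: phi_inj.
by apply: eq_big => [x | x _]; rewrite ?inE ?deg_graph_image.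
Qed.

Lemma maxdeg_graph_image E : maxdeg (graph_image phi E) = maxdeg E.
Proof. by rewrite /maxdeg (big_deg_graph_image _ id). Qed.

Lemma line_size_graph_image E : line_size (graph_image phi E) = line_size E.
Proof. by rewrite /line_size (big_deg_graph_image _ (fun n => 'C(n, 2))). Qed.

End Relabelling.

End SimpleGraphs.

Lemma achievable_of_graph (T : finType) (E : {set {set T}}) :
  simple_graph E -> achievable #|E| (maxdeg E) (line_size E).
Proof.
move=> sE; pose T1 := {x : T | 0 < deg E x}.
pose E1 := [set e1 : {set T1} | val @: e1 \in E].
have val_preim e : e \in E -> val @: (val @^-1: e : {set T1}) = e.
  move=> eE; apply/setP => x; apply/imsetP/idP => [[y] | xe].
    by rewrite inE => ye ->.
  by exists (exist _ x (deg_gt0 eE xe)); rewrite ?inE.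
have imE1 : graph_image val E1 = E.
  apply/setP => e; apply/imsetP/idP => [[e1] | eE]; first by rewrite inE => e1E ->.
  by exists (val @^-1: e); rewrite ?inE val_preim.
have sE1 : simple_graph E1.
  by move=> e1; rewrite inE => /(sE _); rewrite card_imset //; apply: val_inj.
rewrite -imE1 card_graph_image ?maxdeg_graph_image ?line_size_graph_image;
  try exact: val_inj.
exists T1, E1; split; rewrite ?card_line_edges //.
by move=> x; rewrite -(deg_graph_image val_inj) imE1; exact: (valP x).
Qed.

Lemma achievable_isolated N D k : achievable N D k ->
  exists (T : finType) (E : {set {set T}}) (w : T),
    [/\ simple_graph E, #|E| = N, maxdeg E = D, line_size E = k & deg E w = 0].
Proof.
case=> T [E [sE <- <- _ <-]]; exists (option T), (graph_image Some E), None.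
rewrite card_graph_image ?maxdeg_graph_image ?line_size_graph_image ?card_line_edges //;
  try exact: Some_inj.
split=> //; first exact: (simple_graph_image Some_inj).
by apply: deg_graph_image_notin; apply/imsetP => -[].
Qed.

Lemma achievable_lt N D k : achievable N D k -> k < (N * N).+1.
Proof.
case=> T [E [_ <- _ _ <-]]; rewrite ltnS.
apply: leq_trans (_ : 'C(#|E|, 2) <= _).
  rewrite -cards_draws; apply: subset_leq_card; apply/subsetP => F.
  by rewrite !inE => /and3P[-> -> _].
by rewrite bin2; nia.
Qed.

Lemma f_ge N D k : achievable N D k -> k <= f N D.
Proof.
by move=> ak; apply: (leq_bigmax_cond (Ordinal (achievable_lt ak))); apply/asboolP.
Qed.

Lemma f_le N D m : (forall k, achievable N D k -> k <= m) -> f N D <= m.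
Proof. by move=> le_m; apply/bigmax_leqP => k /asboolP; apply: le_m. Qed.

Lemma f_achievable N D k : achievable N D k -> achievable N D (f N D).
Proof.
move=> ak; rewrite /f (bigmax_eq_arg (Ordinal (achievable_lt ak))) /=; last exact/asboolP.
by case: arg_maxnP => [|i /asboolP //]; apply/asboolP.
Qed.

Lemma f_shift N D N' D' c :
  (forall k, achievable N D k -> exists2 k', achievable N' D' k' & k + c <= k') ->
  c <= f N' D' -> f N D + c <= f N' D'.
Proof.
move=> step c_le; case: (pselect (exists k, achievable N D k)) => [[k] | none].
  by move=> /f_achievable /step[k' ak' le]; apply: leq_trans le (f_ge ak').
suff -> : f N D = 0 by [].
by apply/eqP; rewrite -leqn0; apply: f_le => k ak; case: none; exists k.
Qed.

Lemma achievable_maxdeg1 N k : achievable N 1 k -> k = 0.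
Proof.
by case=> T [E [sE _ mE _ <-]]; rewrite card_line_edges // line_size_maxdeg_le1 // mE.
Qed.

Lemma achievable_star D : 0 < D -> achievable D D 'C(D, 2).
Proof.
move=> D0; pose E := [set [set None; Some i] | i : 'I_D].
have spoke_inj : injective (fun i : 'I_D => [set None; Some i]).
  move=> i j eqij; have : Some i \in [set None; Some j] by rewrite -eqij set22.
  by rewrite !inE /= => /eqP[].
have sE : simple_graph E by move=> _ /imsetP[i _ ->]; rewrite cards2.
have cE : #|E| = D by rewrite card_imset // card_ord.
have degN : deg E None = D.
  rewrite -[in RHS]cE; apply: eq_card => e; rewrite inE andb_idr // => /imsetP[i _ ->].
  exact: set21.
have degS i : deg E (Some i) <= 1.
  rewrite -(cards1 [set None; Some i]); apply: subset_leq_card; apply/subsetP => e.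
  by rewrite !inE => /andP[/imsetP[j _ ->]]; rewrite !inE /= => /eqP[->].
have mE : maxdeg E = D.
  by apply: (maxdeg_eq degN) => -[i|]; [apply: leq_trans (degS i) D0 | rewrite degN].
have lE : line_size E = 'C(D, 2).
  rewrite /line_size (bigD1 None) //= degN big1 ?addn0 // => -[i _|//].
  by apply: bin_small; rewrite ltnS degS.
by have := achievable_of_graph sE; rewrite cE mE lE.
Qed.

Lemma achievable_subdivision N D k : 1 < D -> achievable N D k -> achievable N.+1 D k.+1.
Proof.
move=> D2 /achievable_isolated[T [E [w [sE <- mE <- w0]]]]; subst D.
have [v dv] := maxdeg_attained E (ltnW D2).
have /card_gt0P[g gE] : 0 < #|E| by apply: leq_trans (deg_le_card E v); rewrite dv ltnW.
have /cards2P[a [b [ab defg]]] : #|g| == 2 by rewrite sE.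
rewrite defg in gE; have := achievable_of_graph (simple_subdivision sE gE w0).
by rewrite card_subdivision // maxdeg_subdivision // line_size_subdivision.
Qed.

Lemma achievable_broom N D : 1 < D -> D <= N -> achievable N D ('C(D, 2) + (N - D)).
Proof.
move=> D2; elim: N => [|N IH]; first by rewrite leqn0 => /eqP D0; rewrite D0 in D2.
rewrite leq_eqVlt => /orP[/eqP -> | DN]; first by rewrite subnn addn0; apply: achievable_star.
by rewrite subSn // addnS; apply: achievable_subdivision D2 (IH DN).
Qed.

Lemma f_gt0 N D : 1 < D -> D <= N -> 0 < f N D.
Proof.
move=> D2 DN; apply: leq_trans _ (f_ge (achievable_broom N D D2 DN)).
by rewrite addn_gt0 bin_gt0 D2.
Qed.

Lemma achievable_maxdegS_lt N D k : 0 < D -> 'C(D.+1, 2) < N -> achievable N D k ->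
  exists2 k', achievable N D.+1 k' & k < k'.
Proof.
move=> D0 ltN /achievable_isolated[T [E [_ [sE cE mE <- _]]]].
have [v dv] : exists v, deg E v = maxdeg E by apply: maxdeg_attained; rewrite mE.
have lt_deg : 'C((deg E v).+1, 2) < #|E| by rewrite dv mE cE.
have [g [x [gE vg xg xN]]] := exists_edge_off_nbhd v sE lt_deg.
have [y xy defg] := edge_set2 sE gE xg; subst g.
have vx : v != x by apply: contraNneq vg => ->.
have hE : [set v; x] \notin E by rewrite inE in xN.
exists (line_size (exchange E [set x; y] [set v; x])).
  have sE' : simple_graph (exchange E [set x; y] [set v; x]).
    by apply: simple_exchange; rewrite ?cards2 ?vx.
  have := achievable_of_graph sE'.
  by rewrite card_exchange // (maxdeg_exchange gE hE (set21 v x) vg dv) cE mE.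
have := line_size_exchange _ gE hE; rewrite !sum_set2 //.
have := deg_setD1 v gE; have := deg_setD1 y gE; have := deg_le_maxdeg E y.
by rewrite (negbTE vg) set22; lia.
Qed.

Lemma achievable_maxdegS_le N D k : 0 < D -> D < N -> achievable N D k ->
  exists2 k', achievable N D.+1 k' & k + 2 * D <= k' + N + 1.
Proof.
move=> D0 DN /achievable_isolated[T [E [w [sE cE mE <- w0]]]].
have [v dv] : exists v, deg E v = maxdeg E by apply: maxdeg_attained; rewrite mE.
have [g gE vg] : exists2 g, g \in E & v \notin g.
  by apply: exists_edge_notin; rewrite dv mE cE.
have vw : v != w by apply: contraTneq D0 => vw; rewrite -mE -dv vw w0.
have hE : [set v; w] \notin E := contraTN (isolated_notin w0) (set22 v w).
exists (line_size (exchange E g [set v; w])).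
  have sE' : simple_graph (exchange E g [set v; w]).
    by apply: simple_exchange; rewrite ?cards2 ?vw.
  have := achievable_of_graph sE'.
  by rewrite card_exchange // (maxdeg_exchange gE hE (set21 v w) vg dv) cE mE.
have := line_size_exchange _ gE hE; rewrite sum_set2 //.
have := sum_deg_edge_le v sE gE vg; rewrite (sum_deg_setD1 gE) (sE _ gE).
have := deg_setD1 v gE; have := deg_setD1 w gE.
by rewrite (negbTE vg) (negbTE (isolated_notin w0 gE)) w0; lia.
Qed.

Unset Implicit Arguments.

Theorem mainTheorem11 (N : nat) (hN : 1 <= N) :
  [/\ f N 1 = 0,
      (forall D, 2 <= D <= N -> f N D + 1 <= f N.+1 D),
      (forall D, 1 <= D -> 'C(D.+1, 2) < N -> f N D + 1 <= f N D.+1)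
    & (forall D, D.+1 <= N ->
         (N < 2 * D -> f N D <= f N D.+1) /\
         (uphalf N < D -> f N D + 1 <= f N D.+1))].
Proof.
split.
- by apply/eqP; rewrite -leqn0; apply: f_le => k /achievable_maxdeg1 ->.
- move=> D /andP[D2 DN]; apply: f_shift; last by apply: f_gt0 => //; apply: leqW.
  by move=> k /(achievable_subdivision D2) ak; exists k.+1; rewrite ?addn1.
- move=> D D0 ltN; apply: f_shift => [k /(achievable_maxdegS_lt D0 ltN)[k' ak' lt] | ].
    by exists k'; rewrite ?addn1.
  by rewrite binS bin1 in ltN; apply: f_gt0; lia.
- move=> D DN; split=> ltD; have D0 : 0 < D by lia.
  + rewrite -[f N D]addn0; apply: f_shift => // k /(achievable_maxdegS_le D0 DN)[k' ak' le].
    by exists k' => //; lia.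
  + apply: f_shift => [k /(achievable_maxdegS_le D0 DN)[k' ak' le] | ].
      by exists k' => //; lia.
    by apply: f_gt0; lia.
Qed.
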